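(* Let $P\in\mathfrak N_2$ and let $R$ be a retract of $P$ of width three which is a tower of nice sections. Then for every $\ell\in[0,h_R-1]$ the level pair $R(\ell)\cup R(\ell+1)$ is not of type $33$. In particular, if $|R(\ell)|=3$ for all $\ell\in[0,h_R]$, then $R=P$.
   Context: All posets are finite; $h_P$ is the height; level sets $P(0)=\min P$, $P(k+1)=\min(P\setminus\bigcup_{i\le k}P(i))$; level sets $R(\ell)$ of a retract refer to $R$'s own levels. $A<B$ means $a<b$ for all $a\in A,b\in B$. Type $33$ means isomorphic to the ordinal sum of two 3-element antichains. A retract is the image of an idempotent order-preserving self-map. A section is either a 2-element antichain or a poset $P$ of height $h_P\ge1$ with carrier $\{c_{k,j}:k\in[0,h_P],j\in\{0,1,2\}\}$ such that: $c_{0,j}<\dots<c_{h_P,j}$ for each $j$; each $\{c_{k,0},c_{k,1},c_{k,2}\}$ is an antichain; $c_{k,i}<c_{\ell,j}\Rightarrow c_{k,i+1}<c_{\ell,j+1}$ (indices mod 3); and no $P(k)\cup P(k+1)$ is of type $33$. A section is nice if for all $x<y$: $\{z:z>x\}\not\subseteq\{z:z\ge y\}$ and $\{z:z<y\}\not\subseteq\{z:z\le x\}$. A tower of nice sections is an ordinal sum of nice sections. $\mathfrak N_2$ is the class of nice sections of width three of height $\ge2$ with horizon 2, i.e. $P(k)<P(\ell)$ whenever $\ell\ge k+2$. *)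

(* Finite posets are finPOrderType's; subposets are subsets
   {set T} carrying the induced order. *)
From HB Require Import structures.
From mathcomp Require Import all_boot all_order.
Set Implicit Arguments. Unset Strict Implicit. Unset Printing Implicit Defensive.
Import Order.Theory.
Local Open Scope order_scope.

Section PosetDefs.
Context {d : Order.disp_t} {T : finPOrderType d}.

Definition set_lt (A B : {set T}) : Prop :=
  forall a b, a \in A -> b \in B -> a < b.

Definition antichain (A : {set T}) : bool :=
  [forall x in A, forall y in A, (x >=< y) ==> (x == y)].

Definition chain (A : {set T}) : bool :=
  [forall x in A, forall y in A, x >=< y].

Definition width (S : {set T}) : nat :=
  \max_(A : {set T} | (A \subset S) && antichain A) #|A|.

Definition height (S : {set T}) : nat :=
  (\max_(C : {set T} | (C \subset S) && chain C) #|C|).-1.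

Definition mins (X : {set T}) : {set T} :=
  [set x in X | [forall y in X, ~~ (y < x)]].

Fixpoint rest (S : {set T}) (k : nat) : {set T} :=
  match k with
  | 0 => S
  | k'.+1 => rest S k' :\: mins (rest S k')
  end.

Definition level (S : {set T}) (k : nat) : {set T} := mins (rest S k).

(* X (with induced order) is of type 33: isomorphic to the ordinal sum of
   two 3-element antichains *)
Definition type33 (X : {set T}) : Prop :=
  exists A B : {set T}, [/\ A :|: B = X, A :&: B = set0 & #|A| = 3] /\
    [/\ #|B| = 3, antichain A, antichain B & set_lt A B].

Definition is_section (S : {set T}) : Prop :=
  (#|S| = 2 /\ antichain S) \/
  (1 <= height S)%N /\
  exists c : nat -> 'I_3 -> T,
    let h := height S in
    [/\ (forall k l i j, (k <= h)%N -> (l <= h)%N -> c k i = c l j -> k = l /\ i = j),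
        (forall x, x \in S <-> exists k j, (k <= h)%N /\ c k j = x)
      & (forall k j, (k < h)%N -> c k j < c k.+1 j)] /\
    [/\ (forall k i j, (k <= h)%N -> i != j -> ~~ (c k i >=< c k j)),
        (forall k l i j, (k <= h)%N -> (l <= h)%N ->
            c k i < c l j -> c k (ordS i) < c l (ordS j))
      & (forall k, ~ type33 (level S k :|: level S k.+1))].

Definition nice (S : {set T}) : Prop :=
  forall x y, x \in S -> y \in S -> x < y ->
    ~ ([set z in S | x < z] \subset [set z in S | y <= z]) /\
    ~ ([set z in S | z < y] \subset [set z in S | z <= x]).

Definition nice_section (S : {set T}) : Prop := is_section S /\ nice S.

Definition tower_of_nice_sections (R : {set T}) : Prop :=
  exists s : seq {set T},
    [/\ (forall i, (i < size s)%N -> nice_section (nth set0 s i)),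
        (forall i j, (i < j < size s)%N -> set_lt (nth set0 s i) (nth set0 s j)),
        (forall i j, (i < size s)%N -> (j < size s)%N -> i <> j ->
            nth set0 s i :&: nth set0 s j = set0)
      & \bigcup_(X <- s) X = R].

Definition horizon2 (S : {set T}) : Prop :=
  forall k l, (k.+2 <= l)%N -> set_lt (level S k) (level S l).

Definition in_N2 (S : {set T}) : Prop :=
  [/\ nice_section S, width S = 3, (2 <= height S)%N & horizon2 S].

Definition retract_of (R S : {set T}) : Prop :=
  exists f : T -> T,
    [/\ (forall x, x \in S -> f x \in S),
        (forall x y, x \in S -> y \in S -> x <= y -> f x <= f y),
        (forall x, x \in S -> f (f x) = f x)
      & R = [set f x | x in S]].

End PosetDefs.

(* Both P and every section of the tower are three-column grids in which the
   order between two rows is invariant under a cyclic shift of the columns;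
   such a relation is total as soon as it contains a 2x2 pattern, and a total
   pair of consecutive rows is of type 33.

   Suppose R(l) u R(l+1) is of type 33.  A three-element level of R is a row of
   a single section of the tower, so R(l) is the top row of one nice section
   and R(l+1) the bottom row of another.  Niceness gives, for each a in R(l), an
   element of R below two elements of R(l) but not below a, and dually above
   R(l+1).  Going up the column of P from a to the element b of R(l+1) in the
   same column, the retraction jumps from a to b between adjacent rows t, t+1
   of P; by horizon 2 the two witnesses force two elements of R(l) into row t
   and two of R(l+1) into row t+1, a 2x2 pattern between two rows of P.

   If every level of R has three elements, each is a row of P: a section row
   spread over two rows of P would cut the shift-invariant relation between
   adjacent section rows, which counting forbids.  As no element lies below two
   minimal, or above two maximal, elements of a retract, the levels of R are
   then exactly the rows 0, ..., h_P of P. *)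

From mathcomp Require Import all_boot all_order.
From mathcomp Require Import zify.
Set Implicit Arguments. Unset Strict Implicit. Unset Printing Implicit Defensive.

Definition o0 : 'I_3 := @Ordinal 3 0 isT.
Definition o1 : 'I_3 := @Ordinal 3 1 isT.
Definition o2 : 'I_3 := @Ordinal 3 2 isT.

Lemma ord3P (i : 'I_3) : [\/ i = o0, i = o1 | i = o2].
Proof.
case: i => [[|[|[|//]]] lt3]; [apply: Or31 | apply: Or32 | apply: Or33];
  exact: val_inj.
Qed.

Lemma ordS_o0 : ordS o0 = o1. Proof. exact: val_inj. Qed.
Lemma ordS_o1 : ordS o1 = o2. Proof. exact: val_inj. Qed.
Lemma ordS_o2 : ordS o2 = o0. Proof. exact: val_inj. Qed.

Lemma ordS3 (i : 'I_3) : ordS (ordS (ordS i)) = i.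
Proof. by case: (ord3P i) => ->; apply/val_inj. Qed.

Section ShiftInvariantRelation.
Variable r : rel 'I_3.
Hypothesis r_ordS : forall i k, r i k = r (ordS i) (ordS k).

Let r_row0 :
  (r o1 o1 = r o0 o0) * (r o2 o2 = r o0 o0) * (r o1 o2 = r o0 o1) *
  (r o2 o0 = r o0 o1) * (r o1 o0 = r o0 o2) * (r o2 o1 = r o0 o2).
Proof.
by do !split; [ rewrite (r_ordS o0) | rewrite (r_ordS o2) | rewrite (r_ordS o0)
              | rewrite (r_ordS o2) | rewrite (r_ordS o0) | rewrite (r_ordS o2) ];
  rewrite ?ordS_o0 ?ordS_o1 ?ordS_o2.
Qed.

Lemma shift_rel_total : r o0 o0 -> r o0 o1 -> r o0 o2 -> forall i k, r i k.
Proof.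
by move=> r00 r01 r02 i k; case: (ord3P i) => ->; case: (ord3P k) => ->;
  rewrite ?r_row0.
Qed.

Lemma shift_rel_total_2x2 i1 i2 k1 k2 : i1 != i2 -> k1 != k2 ->
  r i1 k1 -> r i1 k2 -> r i2 k1 -> r i2 k2 -> forall i k, r i k.
Proof.
case: (ord3P i1) => ->; case: (ord3P i2) => -> // _;
case: (ord3P k1) => ->; case: (ord3P k2) => -> // _;
rewrite ?r_row0 => ????; exact: shift_rel_total.
Qed.

Lemma shift_rel_col_gap : ~ (forall i k, r i k) -> forall k, exists i, ~~ r i k.
Proof.
move=> ntot k; have [/existsP //|/existsPn col] := boolP [exists i, ~~ r i k].
exfalso; apply: ntot.
move: (col o0) (col o1) (col o2); rewrite !negbK.
by case: (ord3P k) => ->; rewrite ?r_row0 => ???; apply: shift_rel_total.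
Qed.

Lemma shift_rel_row_gap : ~ (forall i k, r i k) -> forall i, exists k, ~~ r i k.
Proof.
move=> ntot i; have [/existsP //|/existsPn row] := boolP [exists k, ~~ r i k].
exfalso; apply: ntot.
move: (row o0) (row o1) (row o2); rewrite !negbK.
by case: (ord3P i) => ->; rewrite ?r_row0 => ???; apply: shift_rel_total.
Qed.

Lemma card_col_ordS k : #|[set i | r i (ordS k)]| = #|[set i | r i k]|.
Proof.
have -> : [set i | r i (ordS k)] = (@ordS 3) @: [set i | r i k].
  apply/setP => i; rewrite inE -{1}(ord_predK i) -r_ordS.
  apply/idP/imsetP => [ri|[i' ri' ->]].
    by exists (ord_pred i); rewrite ?inE ?ord_predK.
  by rewrite ordSK; move: ri'; rewrite inE.
by rewrite card_imset //; exact: ordS_inj.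
Qed.

Lemma card_col k k' : #|[set i | r i k]| = #|[set i | r i k']|.
Proof.
have e1 := card_col_ordS o0; have e2 := card_col_ordS o1.
rewrite ordS_o0 in e1; rewrite ordS_o1 in e2.
by case: (ord3P k) => ->; case: (ord3P k') => ->; rewrite ?e1 ?e2.
Qed.

(* All columns of [r] have the same size: the column of some [a] outside [L]
   holds [L] and [a], while the column of [k2] is inside [L]. *)
Lemma shift_rel_no_cut (L : pred 'I_3) k1 k2 :
  reflexive r -> ~ (forall i k, r i k) ->
  (forall a, L a -> r a k1) -> (forall a, r a k2 -> L a) ->
  (forall a a', ~~ L a -> L a' -> r a' a) -> False.
Proof.
move=> r_refl ntot Lk1 k2L cut.
have [/forallP allL|/forallPn [a La]] := boolP [forall a, L a].
  have colk1 : [set i | r i k1] = setT by apply/setP => i; rewrite !inE Lk1.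
  apply: ntot => i k; suff /setP/(_ i) : [set i | r i k] = setT by rewrite !inE.
  by apply/eqP; rewrite eqEcard subsetT (card_col k k1) colk1 leqnn.
have sub1 : a |: [set a' | L a'] \subset [set i | r i a].
  by apply/subsetP => i; rewrite !inE => /orP[/eqP ->|]; [exact: r_refl | exact: cut].
have sub2 : [set i | r i k2] \subset [set a' | L a'].
  by apply/subsetP => i; rewrite !inE; exact: k2L.
move: (subset_leq_card sub1) (subset_leq_card sub2).
by rewrite cardsU1 inE (negbTE La) (card_col k2 a); lia.
Qed.

End ShiftInvariantRelation.

Import Order.Theory.
Local Open Scope order_scope.

Section Levels.
Context {d : Order.disp_t} {T : finPOrderType d}.
Implicit Types (S X : {set T}) (x y z : T).

Lemma mins_sub X : mins X \subset X.
Proof. by apply/subsetP => x; rewrite inE => /andP []. Qed.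

Lemma mins_below X z : z \in X -> exists2 m, m \in mins X & m <= z.
Proof.
have [n] := ubnP #|[set y in X | y < z]|; elim: n z => // n IH z ltn zX.
have [/existsP [y /andP [yX yz]]|/existsPn zmin] := boolP [exists y in X, y < z].
  have : #|[set w in X | w < y]| < #|[set w in X | w < z]|.
    apply: proper_card; apply/properP; split.
      by apply/subsetP => w; rewrite !inE => /andP [-> wy]; exact: lt_trans wy yz.
    by exists y; rewrite !inE ?yX ?yz // ltxx.
  move=> /leq_trans /(_ ltn) /IH /(_ yX) [m mX my].
  by exists m => //; exact: le_trans my (ltW yz).
exists z => //; rewrite inE zX; apply/forall_inP => y yX.
by move: (zmin y); rewrite yX.
Qed.

Lemma rest_sub S k : rest S k \subset S.
Proof. by elim: k => //= k IH; exact: subset_trans (subsetDl _ _) IH. Qed.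

Lemma rest_mono S k k' : (k <= k')%N -> rest S k' \subset rest S k.
Proof.
move=> /subnK <-; elim: (k' - k)%N => //= n IH.
exact: subset_trans (subsetDl _ _) IH.
Qed.

Lemma level_rest S k : level S k \subset rest S k.
Proof. exact: mins_sub. Qed.

Lemma level_sub S k : level S k \subset S.
Proof. exact: subset_trans (level_rest S k) (rest_sub S k). Qed.

Lemma mem_rest S k x :
  x \in rest S k <-> x \in S /\ forall k', (k' < k)%N -> x \notin level S k'.
Proof.
elim: k => [|k IH] /=; first by split=> [->|[]].
rewrite inE; split.
  move=> /andP [xk /IH [xS xlow]]; split=> // k'.
  by rewrite ltnS leq_eqVlt => /orP [/eqP ->|/xlow].
move=> [xS xlow]; rewrite xlow //; apply/IH; split=> // k' lt.
by apply: xlow; exact: ltnW.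
Qed.

Lemma level_uniq S k k' x : x \in level S k -> x \in level S k' -> k = k'.
Proof.
wlog lt : k k' / (k < k')%N.
  by move=> W xk xk'; case: (ltngtP k k') => [/W|/W|//]; [apply | move=> /(_ xk' xk)].
by move=> xk /(subsetP (level_rest S k')) /mem_rest [_ /(_ k lt)]; rewrite xk.
Qed.

Lemma level_lt S k k' x y :
  x \in level S k -> y \in level S k' -> x < y -> (k < k')%N.
Proof.
move=> xk yk' xy; rewrite ltnNge; apply/negP => le.
have xr : x \in rest S k'.
  by apply: (subsetP (rest_mono S le)); exact: (subsetP (level_rest S k)).
by move: yk'; rewrite inE => /andP [_ /forall_inP /(_ x xr)]; rewrite xy.
Qed.

Lemma level_antichain S k : antichain (level S k).
Proof.
apply/forall_inP => x xk; apply/forall_inP => y yk; apply/implyP.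
move=> /orP []; rewrite le_eqVlt => /orP [/eqP -> //|lt].
  by have := level_lt xk yk lt; rewrite ltnn.
by have := level_lt yk xk lt; rewrite ltnn.
Qed.

Lemma level_pred S k y : y \in level S k.+1 -> exists2 x, x \in level S k & x < y.
Proof.
move=> /(subsetP (level_rest S k.+1)) /=; rewrite inE => /andP [ymin yr].
have : ~~ [forall z in rest S k, ~~ (z < y)] by apply: contra ymin; rewrite inE yr.
move=> /forallPn [z]; rewrite negb_imply negbK => /andP [zr zy].
have [m mmin mz] := mins_below zr.
by exists m => //; exact: le_lt_trans mz zy.
Qed.

Lemma card_rest S k x : x \in rest S k -> (k + #|rest S k| <= #|S|)%N.
Proof.
elim: k => [|k IH]; first by rewrite add0n => _; apply: subset_leq_card; exact: rest_sub.
rewrite inE => /andP [_ xk].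
have [m mmin _] := mins_below xk.
have : (#|rest S k.+1| < #|rest S k|)%N.
  apply: proper_card; apply/properP; split; first exact: subsetDl.
  by exists m; [exact: (subsetP (mins_sub _)) | rewrite inE mmin].
by have := IH xk; lia.
Qed.

Lemma level_exists S x : x \in S -> exists2 k, (k < #|S|)%N & x \in level S k.
Proof.
move=> xS.
have rest_or_level k : x \in rest S k \/ exists2 k', (k' < k)%N & x \in level S k'.
  elim: k => [|k [xk|[k' lt xk']]]; [by left | | by right; exists k' => //; exact: ltnW].
  have [xk'|xnk] := boolP (x \in level S k); first by right; exists k.
  by left; rewrite /= inE xnk.
case: (rest_or_level #|S|) => // xr; have := card_rest xr.
have : (0 < #|rest S #|S| |)%N by apply/card_gt0P; exists x.
lia.
Qed.

(* The index of the level of [x] in [S]; junk value [0] outside [S]. *)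
Definition lev S x : nat :=
  odflt 0%N (omap val [pick k : 'I_#|T|.+1 | x \in level S k]).

Lemma lev_level S x : x \in S -> x \in level S (lev S x).
Proof.
move=> xS; rewrite /lev; case: pickP => [k //|nolevel].
have [k lt xk] := level_exists xS.
have ltT : (k < #|T|.+1)%N.
  by apply: leq_trans lt _; exact: leq_trans (max_card _) (leqnSn _).
by move: (nolevel (Ordinal ltT)); rewrite xk.
Qed.

Lemma lev_eq S k x : x \in level S k -> lev S x = k.
Proof.
by move=> xk; apply: (level_uniq (lev_level (subsetP (level_sub S k) x xk)) xk).
Qed.

Lemma lev_lt S x y : x \in S -> y \in S -> x < y -> (lev S x < lev S y)%N.
Proof. by move=> xS yS; apply: level_lt; exact: lev_level. Qed.

Lemma lev_le S x y : x \in S -> y \in S -> x <= y -> (lev S x <= lev S y)%N.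
Proof.
move=> xS yS; rewrite le_eqVlt => /orP [/eqP -> //|/(lev_lt xS yS)]; exact: ltnW.
Qed.

Lemma level_chain S k x : x \in level S k ->
  exists C : {set T}, [/\ C \subset S, chain C, {in C, forall c, c <= x} & #|C| = k.+1].
Proof.
elim: k x => [|k IH] x xk.
  exists [set x]; split; [| | by move=> c /set1P -> | exact: cards1].
  - by rewrite sub1set; exact: (subsetP (level_sub S 0)).
  - apply/forall_inP => a /set1P ->; apply/forall_inP => b /set1P ->.
    exact: comparablexx.
have [y yk yx] := level_pred xk.
have [C [CS Cch Cy Ck]] := IH y yk.
have Cx : {in C, forall c, c < x} by move=> c /Cy cy; exact: le_lt_trans cy yx.
have xC : x \notin C by apply/negP => /Cx; rewrite ltxx.
exists (x |: C); split.
- by rewrite subUset sub1set CS andbT; exact: (subsetP (level_sub S k.+1)).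
- apply/forall_inP => a /setU1P [->|aC]; apply/forall_inP => b /setU1P [->|bC].
  + exact: comparablexx.
  + by apply: ge_comparable; exact: ltW (Cx b bC).
  + by apply: le_comparable; exact: ltW (Cx a aC).
  + by move: Cch => /forall_inP /(_ a aC) /forall_inP /(_ b bC).
- by move=> c /setU1P [->|/Cx /ltW].
- by rewrite cardsU1 xC Ck.
Qed.

Lemma level_le_height S k x : x \in level S k -> (k <= height S)%N.
Proof.
move=> /level_chain [C [CS Cch _ Ck]].
have : (#|C| <= \max_(C0 : {set T} | (C0 \subset S) && chain C0) #|C0|)%N.
  by apply: leq_bigmax_cond; rewrite CS Cch.
by rewrite Ck /height; lia.
Qed.

Lemma le_level0 S x a : x \in S -> a \in level S 0 -> x <= a -> x = a.
Proof.
move=> xS a0; rewrite le_eqVlt => /orP [/eqP //|].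
by move=> /(lev_lt xS (subsetP (level_sub S 0) a a0)); rewrite (lev_eq a0).
Qed.

Lemma ge_level_height S x a : x \in S -> a \in level S (height S) -> a <= x -> x = a.
Proof.
move=> xS atop; rewrite le_eqVlt => /orP [/eqP //|].
move=> /(lev_lt (subsetP (level_sub S _) a atop) xS); rewrite (lev_eq atop) ltnNge.
by rewrite (level_le_height (lev_level xS)).
Qed.

Lemma type33_levels X l (A B : {set T}) :
  A :|: B = level X l :|: level X l.+1 -> (0 < #|A|)%N -> (0 < #|B|)%N -> set_lt A B ->
  A = level X l /\ B = level X l.+1.
Proof.
move=> eqU /card_gt0P [a aA] /card_gt0P [b bB] AB.
have inU x : x \in A :|: B -> x \in level X l \/ x \in level X l.+1.
  by rewrite eqU inE => /orP.
have AB_in x y : x \in A -> y \in B -> x \in level X l /\ y \in level X l.+1.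
  move=> xA yB; have xy := AB x y xA yB.
  have [xl|xl] := inU x (subsetP (subsetUl A B) x xA);
  have [yl|yl] := inU y (subsetP (subsetUr A B) y yB) => //;
    by have := level_lt xl yl xy; rewrite ?ltnn // ltnNge leqnSn.
have lA x : x \in A -> x \in level X l by move=> xA; case: (AB_in x b xA bB).
have lB x : x \in B -> x \in level X l.+1 by move=> xB; case: (AB_in a x aA xB).
split; apply/setP => x.
  apply/idP/idP => [/lA //|xl].
  have /setUP [//|/lB xl'] : x \in A :|: B by rewrite eqU inE xl.
  by have := level_uniq xl xl'; lia.
apply/idP/idP => [/lB //|xl].
have /setUP [/lA xl'|//] : x \in A :|: B by rewrite eqU inE xl orbT.
by have := level_uniq xl xl'; lia.
Qed.

End Levels.

Section Grid.
Context {d : Order.disp_t} {T : finPOrderType d}.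
Implicit Types (S X : {set T}) (x y z : T).

Definition grid S (c : nat -> 'I_3 -> T) (h : nat) : Prop :=
  [/\ (forall k l i j, (k <= h)%N -> (l <= h)%N -> c k i = c l j -> k = l /\ i = j),
      (forall x, x \in S <-> exists k j, (k <= h)%N /\ c k j = x),
      (forall k j, (k < h)%N -> c k j < c k.+1 j),
      (forall k i j, (k <= h)%N -> i != j -> ~~ (c k i >=< c k j))
    & (forall k l i j, (k <= h)%N -> (l <= h)%N ->
         c k i < c l j -> c k (ordS i) < c l (ordS j))].

Definition grid_row (c : nat -> 'I_3 -> T) k : {set T} := [set c k j | j : 'I_3].

Variables (S : {set T}) (c : nat -> 'I_3 -> T) (h : nat).
Hypothesis gridS : grid S c h.

Lemma grid_inj k l i j : (k <= h)%N -> (l <= h)%N -> c k i = c l j -> k = l /\ i = j.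
Proof. by case: gridS => inj _ _ _ _; exact: inj. Qed.

Lemma grid_mem k j : (k <= h)%N -> c k j \in S.
Proof. by move=> kh; case: gridS => _ cov _ _ _; apply/cov; exists k, j. Qed.

Lemma grid_cover x : x \in S -> exists k j, (k <= h)%N /\ c k j = x.
Proof. by case: gridS => _ cov _ _ _ /cov. Qed.

Lemma grid_ltS k j : (k < h)%N -> c k j < c k.+1 j.
Proof. by case: gridS => _ _ ch _ _; exact: ch. Qed.

Lemma grid_incomparable k i j : (k <= h)%N -> i != j -> ~~ (c k i >=< c k j).
Proof. by case: gridS => _ _ _ an _; exact: an. Qed.

Lemma grid_le k k' j : (k <= k')%N -> (k' <= h)%N -> c k j <= c k' j.
Proof.
move=> /subnK <-; elim: (k' - k)%N => // n IH le.
by apply: le_trans (IH (ltnW le)) (ltW (grid_ltS j _)); rewrite addSn in le.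
Qed.

Lemma grid_lt_row k l i j : (k <= h)%N -> (l <= h)%N -> c k i < c l j -> (k < l)%N.
Proof.
move=> kh lh lt; rewrite ltnNge; apply/negP => lk.
have := lt_le_trans lt (grid_le j lk kh).
have [->|ij] := eqVneq i j; first by rewrite ltxx.
by move=> /lt_comparable; rewrite (negbTE (grid_incomparable kh ij)).
Qed.

Lemma grid_lt_ordS k l i j : (k <= h)%N -> (l <= h)%N ->
  (c k i < c l j) = (c k (ordS i) < c l (ordS j)).
Proof.
case: gridS => _ _ _ _ shift kh lh; apply/idP/idP; first exact: shift.
by move=> /(shift _ _ _ _ kh lh) /(shift _ _ _ _ kh lh); rewrite !ordS3.
Qed.

Lemma mem_grid_row k j : c k j \in grid_row c k.
Proof. exact: imset_f. Qed.

Lemma card_grid_row k : (k <= h)%N -> #|grid_row c k| = 3.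
Proof. by move=> kh; rewrite card_imset ?card_ord // => i j /(grid_inj kh kh) []. Qed.

Lemma grid_row_antichain k : (k <= h)%N -> antichain (grid_row c k).
Proof.
move=> kh; apply/forall_inP => _ /imsetP [i _ ->]; apply/forall_inP => _ /imsetP [j _ ->].
by apply/implyP; have [-> //|ij] := eqVneq i j; rewrite (negbTE (grid_incomparable kh ij)).
Qed.

Section GridInInterval.
Variable X : {set T}.
Hypothesis SX : S \subset X.
Hypothesis S_interval : forall z, z \in X -> z \notin S ->
  (forall s, s \in S -> z < s) \/ (forall s, s \in S -> s < z).

Let cX k j : (k <= h)%N -> c k j \in X.
Proof. by move=> kh; apply: (subsetP SX); exact: grid_mem. Qed.

Lemma lt_grid_lev k j y : (k <= h)%N -> y \in X -> y < c k j ->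
  (exists i, (0 < k)%N /\ (lev X y <= lev X (c k.-1 i))%N) \/ (forall s, s \in S -> y < s).
Proof.
move=> kh yX yc; have [yS|yS] := boolP (y \in S).
  have [k' [i [k'h eyc]]] := grid_cover yS; rewrite -eyc in yc *.
  have kk := grid_lt_row k'h kh yc; left; exists i; split; first by lia.
  by apply: lev_le; rewrite ?cX ?grid_le //; lia.
case: (S_interval yX yS) => [|yS_above]; first by right.
by move: (lt_trans yc (yS_above _ (grid_mem j kh))); rewrite ltxx.
Qed.

Lemma lev_grid_row0 i j : lev X (c 0 i) = lev X (c 0 j).
Proof.
suff le i' j' : (lev X (c 0 i') <= lev X (c 0 j'))%N by apply/eqP; rewrite eqn_leq !le.
have := lev_level (cX i' (leq0n h)); case: (lev X (c 0 i')) => // n /level_pred [y yn yc].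
have yX : y \in X by exact: (subsetP (level_sub X n)).
case: (lt_grid_lev (leq0n h) yX yc) => [[? []] //|y_below].
by rewrite -(lev_eq yn); apply: lev_lt; rewrite ?cX ?y_below ?grid_mem.
Qed.

Lemma lev_grid k j : (k <= h)%N -> lev X (c k j) = (lev X (c 0 o0) + k)%N.
Proof.
elim: k j => [|k IH] j kh; first by rewrite addn0 (lev_grid_row0 j o0).
have lo : (lev X (c 0 o0) + k < lev X (c k.+1 j))%N.
  by rewrite -(IH j (ltnW kh)); apply: lev_lt; rewrite ?cX ?grid_ltS // ltnW.
have := lev_level (cX j kh); move: lo.
case: (lev X (c k.+1 j)) => // n lo /level_pred [y yn yc].
have yX : y \in X by exact: (subsetP (level_sub X n)).
case: (lt_grid_lev kh yX yc) => [[i [_]]|y_below]; first by rewrite (lev_eq yn) IH //=; lia.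
have : (n < lev X (c k j))%N.
  by rewrite -(lev_eq yn); apply: lev_lt; rewrite ?cX ?y_below ?grid_mem // ltnW.
by rewrite IH; lia.
Qed.

Lemma grid_levels : exists b, forall k j, (k <= h)%N -> c k j \in level X (b + k).
Proof.
by exists (lev X (c 0 o0)) => k j kh; rewrite -(lev_grid j kh); apply: lev_level; exact: cX.
Qed.

End GridInInterval.

Lemma grid_level k : (k <= h)%N -> level S k = grid_row c k.
Proof.
have [b bS] := grid_levels (subxx S) (fun z zS nzS => ltac:(by rewrite zS in nzS)).
have b0 : b = 0%N.
  case: b bS => // b bS; have := bS 0%N o0 (leq0n h); rewrite addn0 => /level_pred [y yb yc].
  have [k' [i [k'h e]]] := grid_cover (subsetP (level_sub S b) y yb).
  by move: yc; rewrite -e => /(grid_lt_row k'h (leq0n h)).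
rewrite b0 in bS => kh; apply/setP => x.
apply/idP/imsetP => [xk|[j _ ->]]; last by rewrite bS.
have [k' [i [k'h e]]] := grid_cover (subsetP (level_sub S k) x xk).
by exists i => //; move: (bS k' i k'h); rewrite add0n e => /(level_uniq xk) ->.
Qed.

Lemma grid_type33 k : (k < h)%N -> (forall i j, c k i < c k.+1 j) ->
  type33 (level S k :|: level S k.+1).
Proof.
move=> kh all; have kh' := ltnW kh.
exists (grid_row c k), (grid_row c k.+1); rewrite !grid_level //; split; split.
- by [].
- apply/setP => x; rewrite !inE; apply/negbTE/negP.
  by move=> /andP [/imsetP [i _ ->] /imsetP [j _ /(grid_inj kh' kh) [/n_Sn]]].
- exact: card_grid_row.
- exact: card_grid_row.
- exact: grid_row_antichain.
- exact: grid_row_antichain.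
- by move=> _ _ /imsetP [i _ ->] /imsetP [j _ ->].
Qed.

End Grid.

Section Sections.
Context {d : Order.disp_t} {T : finPOrderType d}.
Implicit Types (S A : {set T}) (x y : T).

Definition section_grid S (c : nat -> 'I_3 -> T) :=
  [/\ grid S c (height S), (1 <= height S)%N
    & forall k, ~ type33 (level S k :|: level S k.+1)].

Lemma antichain_height0 S : antichain S -> height S = 0%N.
Proof.
move=> an; suff : (\max_(C : {set T} | (C \subset S) && chain C) #|C| <= 1)%N.
  by rewrite /height; lia.
apply/bigmax_leqP => C /andP [CS Cch]; rewrite leqNgt; apply/negP.
move=> /card_gt1P [x [y [xC yC xy]]].
move: Cch => /forall_inP /(_ x xC) /forall_inP /(_ y yC) xy_cmp.
move: an => /forall_inP /(_ x (subsetP CS x xC)) /forall_inP /(_ y (subsetP CS y yC)).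
by rewrite xy_cmp (negbTE xy).
Qed.

Lemma section_cases S : is_section S ->
  (#|S| = 2 /\ antichain S) \/ exists c, section_grid S c.
Proof.
case=> [S2|[h1 [c [[inj cov ch] [an shift nt]]]]]; first by left.
by right; exists c; split.
Qed.

Lemma section_grid_of_height S : is_section S -> (1 <= height S)%N ->
  exists c, section_grid S c.
Proof. by case/section_cases => // [[_ /antichain_height0 ->]]. Qed.

Lemma section_grid_of_card S A : is_section S -> A \subset S -> (3 <= #|A|)%N ->
  exists c, section_grid S c.
Proof.
case/section_cases => // [[S2 _]] /subset_leq_card AS A3.
by have := leq_trans A3 AS; rewrite S2.
Qed.

Lemma antichain_not_lt A x y : antichain A -> x \in A -> y \in A -> x != y -> ~~ (x < y).
Proof.
move=> /forall_inP /(_ x) an xA yA xy; apply/negP => lt.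
by move: (an xA) => /forall_inP /(_ y yA); rewrite (lt_comparable lt) (negbTE xy).
Qed.

End Sections.

Section Tower.
Context {d : Order.disp_t} {T : finPOrderType d}.
Implicit Types (S X A : {set T}) (x y z : T).

Lemma level_grid_row X S c h b m :
  grid S c h -> (forall k j, (k <= h)%N -> c k j \in level X (b + k)) ->
  #|level X m| = 3 -> level X m \subset S ->
  [/\ (b <= m)%N, (m - b <= h)%N & level X m = grid_row c (m - b)].
Proof.
move=> gridS cX m3 mS.
have [x xm] : exists x, x \in level X m by apply/set0Pn; rewrite -card_gt0 m3.
have row_of y : y \in level X m -> exists j k, [/\ (k <= h)%N, m = (b + k)%N & c k j = y].
  move=> ym; have [k [j [kh eq]]] := grid_cover gridS (subsetP mS y ym).
  by exists j, k; split => //; apply: (level_uniq ym); rewrite -eq cX.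
have [_ [k [kh em _]]] := row_of x xm; subst m.
have sub : level X (b + k) \subset grid_row c k.
  apply/subsetP => y ym; have [j [k' [_ /eqP]]] := row_of y ym.
  by rewrite eqn_add2l => /eqP <- <-; exact: mem_grid_row.
rewrite addKn; split => //; first exact: leq_addr.
by apply/eqP; rewrite eqEcard sub (card_grid_row gridS) ?m3.
Qed.

Variables (R : {set T}) (s : seq {set T}).
Hypothesis s_nice : forall i, (i < size s)%N -> nice_section (nth set0 s i).
Hypothesis s_lt : forall i j, (i < j < size s)%N -> set_lt (nth set0 s i) (nth set0 s j).
Hypothesis s_cover : \bigcup_(X <- s) X = R.

Lemma tower_cover x : x \in R -> exists2 p, (p < size s)%N & x \in nth set0 s p.
Proof.
rewrite -s_cover bigcup_seq => /bigcupP [X Xs xX].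
by exists (index X s); rewrite ?index_mem ?nth_index.
Qed.

Lemma tower_sub p : (p < size s)%N -> nth set0 s p \subset R.
Proof. by move=> ps; rewrite -s_cover bigcup_seq; apply: bigcup_sup; rewrite mem_nth. Qed.

Lemma tower_interval p z : (p < size s)%N -> z \in R -> z \notin nth set0 s p ->
  (forall w, w \in nth set0 s p -> z < w) \/ (forall w, w \in nth set0 s p -> w < z).
Proof.
move=> ps /tower_cover [q qs zq] zp.
case: (ltngtP p q) => [pq|qp|epq]; last by rewrite epq zq in zp.
  by right => w wp; apply: (s_lt (i := p) (j := q)); rewrite ?pq.
by left => w wp; apply: (s_lt (i := q) (j := p)); rewrite ?qp.
Qed.

Lemma tower_antichain_sub A a p : antichain A -> A \subset R -> a \in A ->
  (p < size s)%N -> a \in nth set0 s p -> A \subset nth set0 s p.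
Proof.
move=> an AR aA ps ap; apply/subsetP => x xA.
have [q qs xq] := tower_cover (subsetP AR x xA).
have [->//|ne] := eqVneq x a.
have nxa := antichain_not_lt an xA aA ne.
have nax := antichain_not_lt an aA xA (contra_neq esym ne).
case: (ltngtP p q) => [pq|qp|-> //].
  by move: nax; rewrite (s_lt (i := p) (j := q)) ?pq.
by move: nxa; rewrite (s_lt (i := q) (j := p)) ?qp.
Qed.

Lemma tower_level_row m : #|level R m| = 3 ->
  exists p c b,
    [/\ (p < size s)%N, section_grid (nth set0 s p) c, nice (nth set0 s p),
        forall k j, (k <= height (nth set0 s p))%N -> c k j \in level R (b + k)
      & [/\ (b <= m)%N, (m - b <= height (nth set0 s p))%N
          & level R m = grid_row c (m - b)]].
Proof.
move=> m3.
have [x xm] : exists x, x \in level R m by apply/set0Pn; rewrite -card_gt0 m3.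
have [p ps xp] := tower_cover (subsetP (level_sub R m) x xm).
have mp := tower_antichain_sub (level_antichain R m) (level_sub R m) xm ps xp.
have [sec nic] := s_nice ps.
have [c secc] := section_grid_of_card sec mp (eq_leq (esym m3)).
have [gridp _ _] := secc.
have [b cR] := grid_levels gridp (tower_sub ps) (fun z zR zp => tower_interval ps zR zp).
by exists p, c, b; split; last exact: level_grid_row gridp cR m3 mp.
Qed.

End Tower.

Section NiceSection.
Context {d : Order.disp_t} {T : finPOrderType d}.
Variables (S : {set T}) (c : nat -> 'I_3 -> T).
Hypothesis secS : section_grid S c.
Hypothesis niceS : nice S.

Let h := height S.
Let gridS : grid S c h. Proof. by case: secS. Qed.
Let h_gt0 : (0 < h)%N. Proof. by case: secS. Qed.
Let no33 : forall k, ~ type33 (level S k :|: level S k.+1). Proof. by case: secS. Qed.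

(* Niceness of [c (h-1) j < c h j] gives an upper cover of [c (h-1) j] in another
   column; the shift symmetry and [no33] give a [j] missing the column [m]. *)
Lemma nice_top m : exists j i, [/\ i != j, c h.-1 j < c h j, c h.-1 j < c h i
   & ~~ (c h.-1 j < c h m)].
Proof.
have eh : h.-1.+1 = h by rewrite prednK.
have hh : (h.-1 <= h)%N by exact: leq_pred.
have ltS j : c h.-1 j < c h j by rewrite -{2}eh (grid_ltS gridS) ?eh.
have up j : exists2 i, i != j & c h.-1 j < c h i.
  have [nsub _] := niceS (grid_mem gridS j hh) (grid_mem gridS j (leqnn h)) (ltS j).
  have /subsetPn [z] : ~~ ([set z in S | c h.-1 j < z] \subset [set z in S | c h j <= z]).
    exact/negP.
  rewrite !inE => /andP [zS jz]; rewrite zS => /= njz.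
  have [k [i [kh eq]]] := grid_cover gridS zS; rewrite -eq in jz njz.
  have /eqP ek : k == h by rewrite eqn_leq kh -eh (grid_lt_row gridS hh kh jz).
  rewrite ek in jz njz; exists i => //; apply: contraNneq njz => ->; exact: lexx.
have ntot : ~ (forall i k, c h.-1 i < c h k).
  move=> tot; have hlt : (h.-1 < h)%N by rewrite ltn_predL.
  by apply: (@no33 h.-1); apply: (grid_type33 gridS hlt); rewrite eh.
have [j nj] := shift_rel_col_gap (fun i k => grid_lt_ordS gridS i k hh (leqnn h)) ntot m.
by have [i ij lt] := up j; exists j, i; split.
Qed.

Lemma nice_bot m : exists j i, [/\ i != j, c 0 j < c 1 j, c 0 i < c 1 j
   & ~~ (c 0 m < c 1 j)].
Proof.
have ltS j : c 0 j < c 1 j by exact: (grid_ltS gridS j h_gt0).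
have down j : exists2 i, i != j & c 0 i < c 1 j.
  have [_ nsub] := niceS (grid_mem gridS j (leq0n h)) (grid_mem gridS j h_gt0) (ltS j).
  have /subsetPn [z] : ~~ ([set z in S | z < c 1 j] \subset [set z in S | z <= c 0 j]).
    exact/negP.
  rewrite !inE => /andP [zS zj]; rewrite zS => /= nzj.
  have [k [i [kh eq]]] := grid_cover gridS zS; rewrite -eq in zj nzj.
  have /eqP ek : k == 0%N by rewrite -leqn0 -ltnS (grid_lt_row gridS kh h_gt0 zj).
  rewrite ek in zj nzj; exists i => //; apply: contraNneq nzj => ->; exact: lexx.
have ntot : ~ (forall i k, c 0 i < c 1 k).
  by move=> tot; exact: no33 (grid_type33 gridS h_gt0 tot).
have [j nj] := shift_rel_row_gap (fun i k => grid_lt_ordS gridS i k (leq0n h) h_gt0) ntot m.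
by have [i ij lt] := down j; exists j, i; split.
Qed.

End NiceSection.

Section Coordinates.
Context {d : Order.disp_t} {T : finPOrderType d}.
Variables (c : nat -> 'I_3 -> T) (h : nat).
Hypothesis gridT : grid [set: T] c h.

Definition coords (x : T) := [pick kj : 'I_h.+1 * 'I_3 | c kj.1 kj.2 == x].
Definition row_of x := if coords x is Some kj then val kj.1 else 0%N.
Definition col_of x := if coords x is Some kj then kj.2 else o0.

Lemma coordsP x : (row_of x <= h)%N /\ c (row_of x) (col_of x) = x.
Proof.
rewrite /row_of /col_of /coords; case: pickP => [[k j] /= /eqP <-|none].
  by rewrite -ltnS.
have [k [j [kh eq]]] := grid_cover gridT (in_setT x).
by move: (none (Ordinal (kh : (k < h.+1)%N), j)); rewrite /= eq eqxx.
Qed.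

Lemma row_of_le x : (row_of x <= h)%N. Proof. by case: (coordsP x). Qed.
Lemma grid_coords x : c (row_of x) (col_of x) = x. Proof. by case: (coordsP x). Qed.

Lemma row_of_grid k j : (k <= h)%N -> row_of (c k j) = k.
Proof. by move=> kh; case: (grid_inj gridT (row_of_le _) kh (grid_coords (c k j))). Qed.

Lemma coords_inj x y : row_of x = row_of y -> col_of x = col_of y -> x = y.
Proof. by move=> er ec; rewrite -(grid_coords x) -(grid_coords y) er ec. Qed.

Lemma row_of_lt x y : x < y -> (row_of x < row_of y)%N.
Proof.
rewrite -{1}(grid_coords x) -{1}(grid_coords y).
by apply: (grid_lt_row gridT); exact: row_of_le.
Qed.

Lemma mem_level_row_of x : x \in level [set: T] (row_of x).
Proof.
rewrite (grid_level gridT (row_of_le x)); apply/imsetP.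
by exists (col_of x); rewrite ?grid_coords.
Qed.

Lemma le_grid_col_of x k : (row_of x <= k)%N -> (k <= h)%N -> x <= c k (col_of x).
Proof. by move=> xk kh; rewrite -{1}(grid_coords x); exact: (grid_le gridT). Qed.

Lemma horizon2_row_of x y : horizon2 [set: T] -> (row_of x + 2 <= row_of y)%N -> x < y.
Proof.
by move=> hor xy; apply: (hor (row_of x) (row_of y)); rewrite ?mem_level_row_of //; lia.
Qed.

(* Two elements in one column are comparable. *)
Lemma antichain3_col B j : antichain B -> #|B| = 3 -> exists2 b, b \in B & col_of b = j.
Proof.
move=> an B3.
have col_inj : {in B &, injective col_of}.
  move=> x y xB yB ec; apply/eqP/negPn/negP => ne.
  wlog xy : x y xB yB ec ne / (row_of x <= row_of y)%N.
    move=> W; case: (leqP (row_of x) (row_of y)) => [|/ltnW]; first exact: W.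
    by apply: W; rewrite // eq_sym.
  have [er|lt] := eqVneq (row_of x) (row_of y).
    by rewrite (coords_inj er ec) eqxx in ne.
  have : x < y.
    rewrite lt_neqAle ne -(grid_coords y) -ec; apply: le_grid_col_of xy _; exact: row_of_le.
  by rewrite (negbTE (antichain_not_lt an xB yB ne)).
have : col_of @: B = setT.
  by apply/eqP; rewrite eqEcard subsetT cardsT card_ord card_in_imset ?B3.
by move/setP/(_ j); rewrite inE => /imsetP [b bB ->]; exists b.
Qed.

End Coordinates.

Lemma exists_threshold (Q : pred nat) p q : (p <= q)%N -> Q p -> ~~ Q q ->
  exists t, [/\ (p <= t)%N, (t < q)%N, Q t & ~~ Q t.+1].
Proof.
elim: q => [|q IH]; first by rewrite leqn0 => /eqP -> ->.
rewrite leq_eqVlt => /orP [/eqP -> -> //|]; rewrite ltnS => pq Qp nQ.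
have [Qq|nQq] := boolP (Q q); first by exists q; split.
by have [t [pt tq Qt nQt]] := IH pq Qp nQq; exists t; split => //; exact: ltnW.
Qed.

Section Ambient.
Context {d : Order.disp_t} {T : finPOrderType d}.
Variable cP : nat -> 'I_3 -> T.
Hypothesis secP : section_grid [set: T] cP.
Hypothesis horP : horizon2 [set: T].

Let hP := height [set: T].
Let gridP : grid [set: T] cP hP. Proof. by case: secP. Qed.
Let no33P : forall k, ~ type33 (level [set: T] k :|: level [set: T] k.+1).
Proof. by case: secP. Qed.

Local Notation row_of := (row_of cP hP).
Local Notation col_of := (col_of cP hP).

Lemma row_of_antichain A x y : antichain A -> x \in A -> y \in A ->
  (row_of x <= (row_of y).+1)%N.
Proof.
move=> an xA yA; rewrite leqNgt; apply/negP => gap.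
have [exy|nexy] := eqVneq y x; first by rewrite exy ltnNge leqnSn in gap.
by have := antichain_not_lt an yA xA nexy; rewrite (horizon2_row_of gridP horP) //; lia.
Qed.

Lemma rows_2x2_not_lt t a1 a2 b1 b2 : (t < hP)%N ->
  row_of a1 = t -> row_of a2 = t -> row_of b1 = t.+1 -> row_of b2 = t.+1 ->
  a1 != a2 -> b1 != b2 -> ~ [/\ a1 < b1, a1 < b2, a2 < b1 & a2 < b2].
Proof.
move=> th ra1 ra2 rb1 rb2 na nb [lt11 lt12 lt21 lt22].
have ca : col_of a1 != col_of a2 by apply: contra_neq na => /coords_inj; apply; congruence.
have cb : col_of b1 != col_of b2 by apply: contra_neq nb => /coords_inj; apply; congruence.
have shift i k := grid_lt_ordS gridP i k (ltnW th) th.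
apply: (@no33P t); apply: (grid_type33 gridP th).
have at_row x k : row_of x = k -> cP k (col_of x) = x by move=> <-; exact: grid_coords.
by apply: (shift_rel_total_2x2 shift ca cb); rewrite /= !at_row.
Qed.

Section SectionRows.
Variables (S : {set T}) (c : nat -> 'I_3 -> T).
Hypothesis secS : section_grid S c.

Let h := height S.
Let gridS : grid S c h. Proof. by case: secS. Qed.
Let h_gt0 : (0 < h)%N. Proof. by case: secS. Qed.
Let no33 : forall k, ~ type33 (level S k :|: level S k.+1). Proof. by case: secS. Qed.

Let row_near k a b : (k <= h)%N -> (row_of (c k a) <= (row_of (c k b)).+1)%N.
Proof.
by move=> kh; apply: row_of_antichain (grid_row_antichain gridS kh) _ _; exact: mem_grid_row.
Qed.

(* Were row [k] spread over two rows of [P], the section rows [k-1, k]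
   (or [0, 1] when [k = 0]) would split along that cut, which no
   shift-invariant relation allows. *)
Lemma section_row_flat k i j : (k <= h)%N -> row_of (c k i) <> (row_of (c k j)).+1.
Proof.
move=> kh rij; set s1 := row_of (c k j) in rij.
have [k0|k_gt0] := posnP k.
  subst k.
  apply: (@shift_rel_no_cut (fun a b => c 0 b < c 1 a) _
            (fun a => s1 + 2 <= row_of (c 1 a))%N j i).
  - by move=> a b; exact: (grid_lt_ordS gridS _ _ (leq0n h) h_gt0).
  - by move=> a; exact: (grid_ltS gridS a h_gt0).
  - by move=> tot; apply: (@no33 0); apply: (grid_type33 gridS h_gt0) => a b; exact: tot.
  - by move=> a /= La; apply: (horizon2_row_of gridP horP); lia.
  - by move=> a /= /(row_of_lt gridP); lia.
  - move=> a a' /= nLa La'; apply: (horizon2_row_of gridP horP).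
    by have := row_of_lt gridP (grid_ltS gridS a h_gt0); have := row_near a j kh; lia.
have ek : k.-1.+1 = k by rewrite prednK.
have kh' : (k.-1 < h)%N by rewrite ek.
apply: (@shift_rel_no_cut (fun a b => c k.-1 a < c k b) _
          (fun a => row_of (c k.-1 a) < s1)%N i j).
- by move=> a b; apply: (grid_lt_ordS gridS); rewrite // ltnW.
- by move=> a /=; rewrite -{2}ek (grid_ltS gridS).
- by move=> tot; apply: (@no33 k.-1); apply: (grid_type33 gridS kh'); rewrite ek.
- by move=> a /= La; apply: (horizon2_row_of gridP horP); lia.
- by move=> a /= /(row_of_lt gridP).
- move=> a a' /= nLa La'; apply: (horizon2_row_of gridP horP).
  have := row_of_lt gridP (grid_ltS gridS a kh'); rewrite ek.
  by have := row_near a j kh; lia.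
Qed.

Lemma section_row_is_row k : (k <= h)%N ->
  exists2 s, (s <= hP)%N & grid_row c k = grid_row cP s.
Proof.
move=> kh; exists (row_of (c k o0)); first exact: (row_of_le gridP).
have same_row a : row_of (c k a) = row_of (c k o0).
  have := row_near a o0 kh; have := row_near o0 a kh.
  have := @section_row_flat k a o0 kh; have := @section_row_flat k o0 a kh; lia.
apply/eqP; rewrite eqEcard (card_grid_row gridS kh).
rewrite (card_grid_row gridP (row_of_le gridP _)) leqnn andbT.
apply/subsetP => _ /imsetP [a _ ->]; rewrite -(grid_coords gridP (c k a)) same_row.
exact: mem_grid_row.
Qed.

End SectionRows.

Definition forked_below (A : {set T}) x :=
  exists a1 a2, [/\ a1 \in A, a2 \in A, a1 != a2, x < a1 & x < a2].

Definition forked_above (A : {set T}) x :=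
  exists a1 a2, [/\ a1 \in A, a2 \in A, a1 != a2, a1 < x & a2 < x].

Let row_ne k : (k <= hP)%N -> cP k o0 != cP k o1.
Proof. by move=> kh; apply/negP => /eqP /(grid_inj gridP kh kh) []. Qed.

Lemma grid_row_forked_below s : nice [set: T] -> (0 < s <= hP)%N ->
  exists x, forked_below (grid_row cP s) x.
Proof.
move=> niceP /andP [s_gt0 sh]; have [s1|s2] := leqP s 1.
  have /eqP es : s == 1%N by rewrite eqn_leq s1.
  subst s; have [j [i [ij _ lt _]]] := nice_bot secP niceP o0.
  exists (cP 0 i), (cP 1 i), (cP 1 j); split; rewrite ?mem_grid_row //.
    by apply: contra_neq ij => /(grid_inj gridP sh sh) [].
  by apply: (grid_ltS gridP).
exists (cP 0 o0), (cP s o0), (cP s o1); split; rewrite ?mem_grid_row ?row_ne //.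
  by apply: (horizon2_row_of gridP horP); rewrite !row_of_grid.
by apply: (horizon2_row_of gridP horP); rewrite !row_of_grid.
Qed.

Lemma grid_row_forked_above s : nice [set: T] -> (s < hP)%N ->
  exists x, forked_above (grid_row cP s) x.
Proof.
move=> niceP sh; have [s1|s2] := leqP hP s.+1.
  have /eqP es : s.+1 == hP by rewrite eqn_leq sh s1.
  have eh : hP.-1 = s by rewrite -es.
  have [j [i [ij _ lt _]]] := nice_top secP niceP o0; rewrite eh in lt.
  exists (cP hP i), (cP s i), (cP s j); split; rewrite ?mem_grid_row //.
    by apply: contra_neq ij => /(grid_inj gridP (ltnW sh) (ltnW sh)) [].
  by rewrite -es; apply: (grid_ltS gridP); rewrite es.
have sh' := ltnW sh.
exists (cP hP o0), (cP s o0), (cP s o1); split; rewrite ?mem_grid_row ?row_ne //.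
  by apply: (horizon2_row_of gridP horP); rewrite !row_of_grid // addn2.
by apply: (horizon2_row_of gridP horP); rewrite !row_of_grid // addn2.
Qed.

Section Retract.
Variables (f : T -> T) (R : {set T}).
Hypothesis f_mono : forall x y, x <= y -> f x <= f y.
Hypothesis f_in : forall x, f x \in R.
Hypothesis f_id : forall r, r \in R -> f r = r.

Lemma retract_row_below x z : x \in R -> ~~ (x <= f z) -> (row_of z <= (row_of x).+1)%N.
Proof.
move=> xR; apply: contraNT; rewrite -ltnNge -addn2 => gap.
by rewrite -(f_id xR) f_mono // ltW // (horizon2_row_of gridP horP).
Qed.

Lemma retract_row_above y z : y \in R -> ~~ (f z <= y) -> (row_of y <= (row_of z).+1)%N.
Proof.
move=> yR; apply: contraNT; rewrite -ltnNge -addn2 => gap.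
by rewrite -(f_id yR) f_mono // ltW // (horizon2_row_of gridP horP).
Qed.

(* Take the threshold of [lev R (f _)] along the column: monotonicity of [f]
   squeezes the value just below it to [a] and just above it to [b]. *)
Lemma retract_column_step l a b : a \in level R l -> b \in level R l.+1 ->
  col_of a = col_of b -> a < b ->
  exists t, [/\ (t < hP)%N, f (cP t (col_of a)) = a & f (cP t.+1 (col_of a)) = b].
Proof.
move=> al bl ec ab; set j := col_of a.
have aR := subsetP (level_sub R l) a al; have bR := subsetP (level_sub R l.+1) b bl.
have ea : cP (row_of a) j = a := grid_coords gridP a.
have eb : cP (row_of b) j = b by rewrite /j ec grid_coords.
pose low t := (lev R (f (cP t j)) <= l)%N.
have low_a : low (row_of a) by rewrite /low ea f_id // (lev_eq al).
have high_b : ~~ low (row_of b) by rewrite /low eb f_id // (lev_eq bl) -ltnNge.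
have [t [a_t tb lowt hight]] := exists_threshold (ltnW (row_of_lt gridP ab)) low_a high_b.
have th : (t < hP)%N := leq_trans tb (row_of_le gridP b).
rewrite /low in lowt hight.
exists t; split => //; apply/eqP/negPn/negP => ne.
- have : a < f (cP t j).
    by rewrite lt_neqAle eq_sym ne -(f_id aR) -ea f_mono // (grid_le gridP _ a_t (ltnW th)).
  by move=> /(lev_lt aR (f_in _)); rewrite (lev_eq al) ltnNge lowt.
- have : f (cP t.+1 j) < b.
    by rewrite lt_neqAle ne -(f_id bR) -eb f_mono // (grid_le gridP _ tb (row_of_le gridP _)).
  by move=> /(lev_lt (f_in _) bR); rewrite (lev_eq bl) ltnS; exact/negP.
Qed.

(* [x] and [y] pin the two levels to the rows of [P] where [f] jumps, so two
   rows of [P] would contain a complete 2x2 pattern. *)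
Lemma retract_forked_levels l : #|level R l| = 3 -> #|level R l.+1| = 3 ->
  set_lt (level R l) (level R l.+1) ->
  (forall a, a \in level R l ->
     exists x, [/\ x \in R, forked_below (level R l) x & ~~ (x <= a)]) ->
  (forall b, b \in level R l.+1 ->
     exists y, [/\ y \in R, forked_above (level R l.+1) y & ~~ (b <= y)]) ->
  False.
Proof.
move=> l3 l3' lt_l fork_l fork_l'.
have [a al] : exists a, a \in level R l by apply/set0Pn; rewrite -card_gt0 l3.
have [b bl bj] := antichain3_col gridP (col_of a) (level_antichain R l.+1) l3'.
have [t [th fa fb]] := retract_column_step al bl (esym bj) (lt_l a b al bl).
have [x [xR [a1 [a2 [a1l a2l a12 xa1 xa2]]] nxa]] := fork_l a al.
have [y [yR [b1 [b2 [b1l b2l b12 b1y b2y]]] nby]] := fork_l' b bl.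
have rx := retract_row_below (z := cP t (col_of a)) xR.
rewrite fa (row_of_grid gridP _ (ltnW th)) in rx; have {}rx := rx nxa.
have ry := retract_row_above (z := cP t.+1 (col_of a)) yR.
rewrite fb (row_of_grid gridP _ th) in ry; have {}ry := ry nby.
have rlt u v : u < v -> (row_of u < row_of v)%N by exact: (row_of_lt gridP).
have pin u v : x < u -> u < v -> v < y -> row_of u = t /\ row_of v = t.+1.
  move=> /rlt xu /rlt uv /rlt vy; move: rx ry; clear -xu uv vy; lia.
have [ra1 rb1] := pin _ _ xa1 (lt_l _ _ a1l b1l) b1y.
have [ra2 _] := pin _ _ xa2 (lt_l _ _ a2l b1l) b1y.
have [_ rb2] := pin _ _ xa1 (lt_l _ _ a1l b2l) b2y.
by apply: (rows_2x2_not_lt th ra1 ra2 rb1 rb2 a12 b12); split; apply: lt_l.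
Qed.

Variable s : seq {set T}.
Hypothesis s_nice : forall i, (i < size s)%N -> nice_section (nth set0 s i).
Hypothesis s_lt : forall i j, (i < j < size s)%N -> set_lt (nth set0 s i) (nth set0 s j).
Hypothesis s_cover : \bigcup_(X <- s) X = R.

Lemma tower_top_forked l : #|level R l| = 3 -> set_lt (level R l) (level R l.+1) ->
  forall a, a \in level R l ->
  exists x, [/\ x \in R, forked_below (level R l) x & ~~ (x <= a)].
Proof.
move=> l3 lt_l.
have [p [c [b [ps secc nicep cR [bl kh eL]]]]] := tower_level_row s_nice s_lt s_cover l3.
set S := nth set0 s p in secc nicep cR kh eL; have [gridS h_gt0 no33S] := secc.
have /eqP top : (l - b == height S)%N.
  rewrite eqn_leq kh leqNgt; apply/negP => kh'; apply: (@no33S (l - b)).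
  apply: (grid_type33 gridS kh') => i j; apply: lt_l; first by rewrite eL mem_grid_row.
  by have := cR _ j kh'; rewrite addnS subnKC.
rewrite {}eL {}top => _ /imsetP [m _ ->].
have [j [i [ij xj xi nxm]]] := nice_top secc nicep m.
set h := height S in gridS h_gt0 xj xi nxm *; have hh : (h.-1 <= h)%N := leq_pred h.
exists (c h.-1 j); split.
- exact: subsetP (tower_sub s_cover ps) _ (grid_mem gridS j hh).
- exists (c h j), (c h i); split; rewrite ?mem_grid_row //.
  by apply: contra_neq ij => /(grid_inj gridS (leqnn h) (leqnn h)) [_ ->].
- rewrite le_eqVlt negb_or nxm andbT; apply/eqP => /(grid_inj gridS hh (leqnn h)) [].
  by rewrite -[h in _ = h](prednK h_gt0) => /n_Sn.
Qed.

Lemma tower_bot_forked l : #|level R l.+1| = 3 -> set_lt (level R l) (level R l.+1) ->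
  forall b, b \in level R l.+1 ->
  exists y, [/\ y \in R, forked_above (level R l.+1) y & ~~ (b <= y)].
Proof.
move=> l3 lt_l.
have [p [c [b [ps secc nicep cR [bl kh eL]]]]] := tower_level_row s_nice s_lt s_cover l3.
set S := nth set0 s p in secc nicep cR kh eL; have [gridS h_gt0 no33S] := secc.
have /eqP bot : (l.+1 - b == 0)%N.
  rewrite -leqn0 leqNgt; apply/negP => k_gt0.
  have ek : (l.+1 - b).-1.+1 = (l.+1 - b)%N by rewrite prednK.
  have kh' : ((l.+1 - b).-1 < height S)%N by rewrite ek.
  apply: (@no33S (l.+1 - b).-1); apply: (grid_type33 gridS kh') => i j.
  rewrite ek; apply: lt_l; last by rewrite eL mem_grid_row.
  have el : (b + (l.+1 - b).-1)%N = l by move: k_gt0; clear; lia.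
  by have := cR _ i (ltnW kh'); rewrite el.
rewrite {}eL {}bot => _ /imsetP [m _ ->].
have [j [i [ij jy iy nmy]]] := nice_bot secc nicep m.
exists (c 1 j); split.
- exact: subsetP (tower_sub s_cover ps) _ (grid_mem gridS j h_gt0).
- exists (c 0 j), (c 0 i); split; rewrite ?mem_grid_row //.
  by apply: contra_neq ij => /(grid_inj gridS (leq0n _) (leq0n _)) [_ ->].
- rewrite le_eqVlt negb_or nmy andbT.
  by apply/eqP => /(grid_inj gridS (leq0n _) h_gt0) [].
Qed.

Lemma retract_tower_no_type33 l : ~ type33 (level R l :|: level R l.+1).
Proof.
move=> [A [B [[eqU _ A3] [B3 _ _ AB]]]].
have [eA eB] := type33_levels eqU (ltac:(by rewrite A3)) (ltac:(by rewrite B3)) AB.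
subst A B; apply: (retract_forked_levels A3 B3 AB).
- exact: tower_top_forked.
- exact: tower_bot_forked.
Qed.

Lemma retract_level_grid_row m : #|level R m| = 3 ->
  exists2 k, (k <= hP)%N & level R m = grid_row cP k.
Proof.
move=> m3; have [p [c [b [_ secc _ _ [_ kh ->]]]]] := tower_level_row s_nice s_lt s_cover m3.
exact: section_row_is_row secc _ kh.
Qed.

Lemma retract_min_not_forked x : ~ forked_below (level R 0) x.
Proof.
move=> [a1 [a2 [a1l a2l a12 xa1 xa2]]].
have fx_eq a : a \in level R 0 -> x < a -> f x = a.
  move=> al xa; apply: (le_level0 (f_in x) al).
  by rewrite -(f_id (subsetP (level_sub R 0) a al)) f_mono // ltW.
by move: a12; rewrite -(fx_eq a1) // -(fx_eq a2) // eqxx.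
Qed.

Lemma retract_max_not_forked x : ~ forked_above (level R (height R)) x.
Proof.
move=> [a1 [a2 [a1l a2l a12 a1x a2x]]].
have fx_eq a : a \in level R (height R) -> a < x -> f x = a.
  move=> al ax; apply: (ge_level_height (f_in x) al).
  by rewrite -(f_id (subsetP (level_sub R _) a al)) f_mono // ltW.
by move: a12; rewrite -(fx_eq a1) // -(fx_eq a2) // eqxx.
Qed.

Hypothesis niceP : nice [set: T].
Hypothesis levels3 : forall l, (l <= height R)%N -> #|level R l| = 3.

Lemma retract_levels_rows m : (m <= height R)%N -> (m <= hP)%N /\ level R m = grid_row cP m.
Proof.
elim: m => [_|m IH mR].
  have [k kh e0] := retract_level_grid_row (levels3 (leq0n _)).
  suff k0 : k = 0%N by rewrite e0 k0.
  apply/eqP; rewrite -leqn0 leqNgt; apply/negP => k_gt0.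
  have [x] := @grid_row_forked_below k niceP (ltac:(by rewrite k_gt0 kh)).
  by rewrite -e0; exact: retract_min_not_forked.
have [mh em] := IH (ltnW mR).
have [k kh ek] := retract_level_grid_row (levels3 mR).
have k_in : cP k o0 \in level R m.+1 by rewrite ek mem_grid_row.
have [x xm x_lt] := level_pred k_in.
have mk : (m < k)%N.
  by move: xm x_lt; rewrite em => /imsetP [i _ ->] /(grid_lt_row gridP mh kh).
suff ekm : k = m.+1 by subst k; split.
apply/eqP; rewrite eqn_leq mk andbT leqNgt; apply/negP => gap.
apply: (@retract_tower_no_type33 m); exists (level R m), (level R m.+1).
split; split; rewrite ?levels3 ?(ltnW mR) ?level_antichain //.
- apply/setP => z; rewrite in_setI in_set0; apply/negbTE/negP => /andP [zm zm'].
  by have := level_uniq zm zm'; lia.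
- rewrite em ek => _ _ /imsetP [i _ ->] /imsetP [j _ ->].
  by apply: (horizon2_row_of gridP horP); rewrite !row_of_grid // addn2.
Qed.

Lemma retract_tower_full : R = [set: T].
Proof.
have [hR eR] := retract_levels_rows (leqnn (height R)).
have top : height R = hP.
  apply/eqP; rewrite eqn_leq hR leqNgt; apply/negP => lt_hP.
  have [x] := grid_row_forked_above niceP lt_hP.
  by rewrite -eR; exact: retract_max_not_forked.
apply/setP => y; rewrite inE -(grid_coords gridP y).
have yR : (row_of y <= height R)%N by rewrite top row_of_le.
have [_ ey] := retract_levels_rows yR.
by apply: (subsetP (level_sub R (row_of y))); rewrite ey mem_grid_row.
Qed.

End Retract.

End Ambient.

Local Close Scope order_scope.

Theorem lemma5p2 (d : Order.disp_t) (T : finPOrderType d) (R : {set T}) :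
  in_N2 [set: T] ->
  retract_of R [set: T] ->
  width R = 3 ->
  tower_of_nice_sections R ->
  (forall l : nat, (l < height R)%N -> ~ type33 (level R l :|: level R l.+1)) /\
  ((forall l : nat, (l <= height R)%N -> #|level R l| = 3) -> R = [set: T]).
Proof.
move=> [[secP niceP] _ hP2 horP] [f [_ f_mono f_id ->]] _ [s [s_nice s_lt _ s_cover]].
have [cP secP'] := section_grid_of_height secP (ltnW hP2).
have f_mono' x y : (x <= y)%O -> (f x <= f y)%O by apply: f_mono; rewrite inE.
have f_in x : f x \in [set f x | x in [set: T]] by exact: imset_f.
have f_id' r : r \in [set f x | x in [set: T]] -> f r = r.
  by move=> /imsetP [x _ ->]; exact: f_id.
split=> [l _|levels3].
  exact: (retract_tower_no_type33 secP' horP f_mono' f_in f_id' s_nice s_lt s_cover).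
exact: (retract_tower_full secP' horP f_mono' f_in f_id' s_nice s_lt s_cover niceP levels3).
Qed.
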